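(* Every univariate real polynomial $p$ that is not identically zero is amenable as a function $p:\mathbb{R}\to\mathbb{R}$.
   Context: Relative distance on $\mathbb{R}$: $\mathrm{dist}(x,y)=0$ if $x=y=0$, $\mathrm{dist}(x,y)=|\log(y/x)|$ if $xy>0$, and $\mathrm{dist}(x,y)=\infty$ otherwise. For a real analytic function $f$ on an open set $\Omega\subseteq\mathbb{R}$, not identically zero, the condition number is $\kappa(f,x)=0$ if $x=0$, $\kappa(f,x)=\infty$ if $x\neq0$ and $f(x)=0$, and $\kappa(f,x)=|x|\,|f'(x)|/|f(x)|$ otherwise; $\mu(f,x)=1+\kappa(f,x)$. $f:\Omega\to\mathbb{R}$ is amenable if there is $C>0$ such that for every $x\in\Omega$ with $\kappa(f,x)<\infty$, the set $B_x=\{y\in\mathbb{R}:\mathrm{dist}(y,x)<1/(C\mu(f,x))\}$ is contained in $\Omega$ and $\mu(f,y)\leq C\mu(f,x)$ for all $y\in B_x$. *)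

From HB Require Import structures.
From mathcomp Require Import all_boot all_order all_algebra.
From mathcomp Require Import all_classical all_reals all_analysis.
Set Implicit Arguments. Unset Strict Implicit. Unset Printing Implicit Defensive.
Import Order.TTheory GRing.Theory Num.Theory.
Import numFieldNormedType.Exports.
Local Open Scope classical_set_scope.
Local Open Scope ring_scope.

Definition reldist {R : realType} (x y : R) : \bar R :=
  if (x == 0) && (y == 0) then 0%E
  else if 0 < x * y then (`|ln (y / x)|)%:E
  else +oo%E.

Definition kappa {R : realType} (f : R -> R) (x : R) : \bar R :=
  if x == 0 then 0%E
  else if f x == 0 then +oo%E
  else (`|x| * `|derive1 f x| / `|f x|)%:E.

Definition mu {R : realType} (f : R -> R) (x : R) : \bar R := (1 + kappa f x)%E.

Definition amenable {R : realType} (Omega : set R) (f : R -> R) : Prop :=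
  exists C : R, 0 < C /\
    forall x, Omega x -> (kappa f x < +oo)%E ->
      let Bx := [set y | (reldist y x < (1 / (C * fine (mu f x)))%:E)%E] in
      Bx `<=` Omega /\ forall y, Bx y -> (mu f y <= C%:E * mu f x)%E.

From HB Require Import structures.
From mathcomp Require Import all_boot all_order all_algebra.
From mathcomp Require Import all_classical all_reals all_analysis.
From mathcomp Require Import ring lra zify.
Import Order.TTheory GRing.Theory Num.Theory.
Import numFieldNormedType.Exports.
Local Open Scope classical_set_scope.
Local Open Scope ring_scope.

(* Write z p'(z) / p(z) = b(z) / a(z) in lowest terms: with d = gcd(p, X p'),
   a = p / d and b = X p' / d are coprime, so D = a^2 + b^2 has no real zero.
   At every regular point z, mu(p, z) = 1 + |b(z)| / |a(z)| lies within a
   factor 2 of 1 / |g(z)|, where g = a / sqrt D.  Since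
   z g'(z) = b(z) * z (a' b - a b')(z) / D(z)^(3/2) and deg X (a' b - a b') is at
   most the degree of a^2 or of b^2, the positivity of D makes z g'(z) bounded
   by some K; hence |g x - g y| <= K |ln (x / y)|.  On the relative ball of
   radius 1 / (C mu(p, x)) the value |g y| therefore stays above half of
   |g x|, which gives mu(p, y) <= 4 mu(p, x).  Nonzero roots of p are roots of
   a, so no such y is a root of p. *)

Section PolyGrowth.
Context {R : realFieldType}.
Implicit Types (N E : {poly R}) (z : R).

Lemma norm_horner_le_coef_sum {N n z} : (size N <= n)%N -> 1 <= `|z| ->
  `|z| * `|N.[z]| <= (\sum_(i < size N) `|N`_i|) * `|z| ^+ n.
Proof.
move=> sizeN z_ge1; rewrite horner_coef mulr_suml.
apply: le_trans (ler_wpM2l (normr_ge0 z) (ler_norm_sum _ _ _)) _.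
rewrite mulr_sumr; apply: ler_sum => i _.
rewrite normrM normrX mulrCA -exprS; apply: ler_wpM2l => //.
by apply: ler_weXn2l => //; have := ltn_ord i; lia.
Qed.

Lemma horner_bigO_infty {N E} : E != 0 -> (size N <= size E)%N ->
  exists M K, 0 <= M /\ 0 <= K /\ forall z, M <= `|z| -> `|N.[z]| <= K * `|E.[z]|.
Proof.
move=> E_neq0 sizeNE.
set e := (size E).-1; set lc := `|lead_coef E|; set T := take_poly e E.
have lc_gt0 : 0 < lc by rewrite normr_gt0 lead_coef_eq0.
have sizeE : size E = e.+1 by rewrite prednK // size_poly_gt0.
have E_split z : E.[z] = T.[z] + lead_coef E * z ^+ e.
  have size_drop : (size (drop_poly e E) <= 1)%N by rewrite size_drop_poly sizeE subSnn.
  rewrite -{1}(poly_take_drop e E) (size1_polyC size_drop) coef_drop_poly add0n.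
  by rewrite -/T hornerD hornerM hornerC hornerXn lead_coefE.
set ST := \sum_(i < size T) `|T`_i|; set SN := \sum_(i < size N) `|N`_i|.
have SN_ge0 : 0 <= SN by apply: sumr_ge0.
have K_ge0 : 0 <= 2 * SN / lc by rewrite divr_ge0 ?mulr_ge0 // ltW.
exists (Num.max 1 (2 * ST / lc)), (2 * SN / lc).
split; first by rewrite le_max ler01.
split=> // z.
rewrite ge_max => /andP[z_ge1 z_large].
have z_gt0 : 0 < `|z| by apply: lt_le_trans z_ge1.
have P_ge0 : 0 <= `|z| ^+ e by rewrite exprn_ge0.
have boundT := norm_horner_le_coef_sum (size_take_poly e E) z_ge1.
rewrite -/ST in boundT.
have boundN : `|N.[z]| <= SN * `|z| ^+ e.
  rewrite sizeE in sizeNE; have := norm_horner_le_coef_sum sizeNE z_ge1.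
  by rewrite exprS mulrCA ler_pM2l.
have ST_small : ST <= lc * `|z| / 2.
  by move: z_large; rewrite ler_pdivrMr // => ?; lra.
have T_small : `|T.[z]| <= lc * `|z| ^+ e / 2.
  rewrite -(ler_pM2l z_gt0); apply: le_trans boundT _.
  by have := ler_wpM2r P_ge0 ST_small; lra.
have E_large : lc * `|z| ^+ e / 2 <= `|E.[z]|.
  rewrite E_split addrC; apply: le_trans (lerB_normD _ _).
  by rewrite normrM normrX -/lc; lra.
apply: le_trans boundN (le_trans _ (ler_wpM2l K_ge0 E_large)).
by rewrite [leRHS](_ : _ = SN * `|z| ^+ e) //; field; rewrite gt_eqF.
Qed.

End PolyGrowth.

Lemma horner_bigO_pos {R : realType} {N E D : {poly R}} :
  (forall z, 0 < D.[z]) -> (forall z, `|E.[z]| <= D.[z]) -> (size N <= size E)%N ->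
  exists K, forall z, `|N.[z]| <= K * D.[z].
Proof.
move=> D_gt0 E_le_D sizeNE.
have [E0|E_neq0] := eqVneq E 0.
  move: sizeNE; rewrite E0 size_poly0 leqn0 size_poly_eq0 => /eqP->.
  by exists 0 => z; rewrite horner0 normr0 mul0r.
have [M [K [M_ge0 [K_ge0 N_le_E]]]] := horner_bigO_infty E_neq0 sizeNE.
have [ub N_le_ub] := poly_disk_bound N M.
have [c _ D_min] : exists2 c, c \in `[- M, M] & forall t, t \in `[- M, M] -> D.[c] <= D.[t].
  by apply: EVT_min; [lra | exact/continuous_subspaceT/continuous_horner].
have ub_ge0 : 0 <= ub by apply: le_trans (N_le_ub 0 _); rewrite ?normr0.
exists (K + ub / D.[c]) => z.
have [M_le_z|z_lt_M] := leP M `|z|.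
  apply: le_trans (N_le_E z M_le_z) _; rewrite mulrDl.
  apply: le_trans (ler_wpM2l K_ge0 (E_le_D z)) _.
  by rewrite lerDl mulr_ge0 ?divr_ge0 // ltW.
have Dc_le_Dz : D.[c] <= D.[z] by apply: D_min; rewrite in_itv /= -ler_norml ltW.
apply: le_trans (N_le_ub z (ltW z_lt_M)) _; rewrite mulrDl.
rewrite -{1}[ub](@divfK _ D.[c]) ?gt_eqF //.
apply: le_trans (ler_wpM2l (divr_ge0 ub_ge0 (ltW (D_gt0 c))) Dc_le_Dz) _.
by rewrite lerDr mulr_ge0 // ltW.
Qed.

Lemma derive_bounded_lipschitz {R : realType} (h dh : R -> R) (K u v : R) :
  (forall t : R, is_derive t 1 h (dh t)) -> (forall t, `|dh t| <= K) ->
  `|h v - h u| <= K * `|v - u|.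
Proof.
move=> h_derive dh_le; wlog le_uv : u v / u <= v.
  move=> W; have [|/ltW] := leP u v; first exact: W.
  by move=> /W; rewrite distrC (distrC v).
have h_cont : {within `[u, v], continuous h}.
  apply: continuous_subspaceT => t; apply/differentiable_continuous.
  by have [/derivable1_diffP] := h_derive t.
have [c _ ->] := MVT_segment le_uv (fun t _ => h_derive t) h_cont.
by rewrite normrM ler_wpM2r.
Qed.

Lemma scaled_derive_bounded_ln_lipschitz (R : realType) (g dg : R -> R) (K x y : R) :
  (forall z : R, is_derive z 1 g (dg z)) -> (forall z, `|z * dg z| <= K) ->
  0 < x * y -> `|g x - g y| <= K * `|ln (x / y)|.
Proof.
move=> g_derive zdg_le xy_gt0.
have y_neq0 : y != 0 by apply: contraTneq xy_gt0 => ->; rewrite mulr0 ltxx.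
have x_div_y_gt0 : 0 < x / y.
  have -> : x / y = x * y / y ^+ 2 by field.
  by rewrite divr_gt0 // exprn_even_gt0.
pose h t := g (y * expR t).
have h_derive (t : R) : is_derive t 1 h (dg (y * expR t) * (y * expR t)).
  exact: is_derive1_comp.
have := @derive_bounded_lipschitz _ h _ K 0 (ln (x / y)) h_derive.
rewrite /h subr0 expR0 mulr1 lnK ?posrE // mulrC divfK //; apply=> t.
by rewrite mulrC.
Qed.

Section SumOfSquares.
Context {R : rcfType}.
Implicit Types u v : R.

Lemma ler_norm_sqrt_sum_sqr u v : `|u| <= Num.sqrt (u ^+ 2 + v ^+ 2).
Proof. by rewrite -sqrtr_sqr ler_wsqrtr // lerDl sqr_ge0. Qed.

Lemma sqrt_sum_sqr_le_sum_norm u v :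
  Num.sqrt (u ^+ 2 + v ^+ 2) <= `|u| + `|v| <= 2 * Num.sqrt (u ^+ 2 + v ^+ 2).
Proof.
apply/andP; split; last first.
  have := ler_norm_sqrt_sum_sqr u v; have := ler_norm_sqrt_sum_sqr v u.
  by rewrite addrC; lra.
rewrite -(ger0_norm (addr_ge0 (normr_ge0 u) (normr_ge0 v))) -sqrtr_sqr.
rewrite ler_wsqrtr // sqrrD -[u ^+ 2]real_normK -?[v ^+ 2]real_normK ?num_real //.
by rewrite -addrA lerD2l lerDr mulrn_wge0 // mulr_ge0.
Qed.

End SumOfSquares.

Section PolyDerivative.
Context {R : numFieldType}.
Implicit Types (p a b : {poly R}) (y : R).

Lemma size_Xwronskian_le a b :
  (size ('X * (a^`() * b - a * b^`()))%R <= (size a + size b).-1)%N.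
Proof.
have [->|a_neq0] := eqVneq a 0; first by rewrite deriv0 !mul0r subrr mulr0 size_poly0.
have [->|b_neq0] := eqVneq b 0; first by rewrite deriv0 !mulr0 subrr mulr0 size_poly0.
have a'_lt : (size a^`() < size a)%N := lt_size_deriv a_neq0.
have b'_lt : (size b^`() < size b)%N := lt_size_deriv b_neq0.
have a'b_le : (size (a^`() * b)%R <= (size a^`() + size b).-1)%N := size_polyMleq _ _.
have ab'_le : (size (a * b^`())%R <= (size a + size b^`()).-1)%N := size_polyMleq _ _.
have w_le : (size (a^`() * b - a * b^`())%R <=
             maxn (size (a^`() * b)%R) (size (a * b^`())%R))%N.
  by rewrite -(size_polyN (a * b^`())) size_polyD.
have Xw_le : (size ('X * (a^`() * b - a * b^`()))%R <=
              (size (a^`() * b - a * b^`())%R).+1)%N.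
  by have := size_polyMleq 'X (a^`() * b - a * b^`()); rewrite size_polyX.
lia.
Qed.

Lemma root_div_gcdp_Xderiv p y : p != 0 -> y != 0 -> root p y ->
  root (p %/ gcdp p ('X * p^`())) y.
Proof.
move=> p_neq0 y_neq0 py; set d := gcdp p ('X * p^`()).
have [[|m] [q /implyP/(_ p_neq0) qy p_eq]] := multiplicity_XsubC p y.
  by move: py; rewrite p_eq expr0 mulr1 (negbTE qy).
set L := 'X - y%:P.
have Xderiv_eq : 'X * p^`() = L ^+ m * ('X * (q^`() * L + q *+ m.+1)).
  rewrite p_eq derivM deriv_exp derivXsubC exprSr /L -!mulrnAr; ring.
apply: contraT => a_y.
have Lm_dvd_d : L ^+ m.+1 %| d.
  have Lm_coprime : coprimep (L ^+ m.+1) (p %/ d).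
    by rewrite coprimep_expl // coprimep_sym coprimep_XsubC.
  by rewrite -(Gauss_dvdpr _ Lm_coprime) divpK ?dvdp_gcdl // {1}p_eq dvdp_mull.
have := dvdp_trans Lm_dvd_d (dvdp_gcdr p _).
rewrite Xderiv_eq exprSr dvdp_mul2l ?expf_neq0 ?polyXsubC_eq0 // dvdp_XsubCl.
rewrite /root !hornerE subrr mulr0 add0r hornerMn.
by rewrite mulf_eq0 mulrn_eq0 (negbTE y_neq0) -[q.[y] == 0]/(root q y) (negbTE qy).
Qed.

End PolyDerivative.

Lemma kappa_horner (R : realType) (p : {poly R}) z : z != 0 -> p.[z] != 0 ->
  kappa (horner p) z = (`|z * p^`().[z]| / `|p.[z]|)%:E.
Proof. by move=> z_neq0 pz_neq0; rewrite /kappa (negbTE z_neq0) (negbTE pz_neq0) derivE normrM. Qed.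

Section ConditionNumberAtZero.
Context {R : realType}.
Implicit Types (f : R -> R) (x y r : R).

Lemma mu0 f : mu f 0 = 1%E.
Proof. by rewrite /mu /kappa eqxx adde0. Qed.

Lemma reldist0_lt_fin y r : (reldist y 0 < r%:E)%E -> y = 0.
Proof. by rewrite /reldist eqxx andbT mulr0 ltxx; case: eqP => // _; rewrite ltNge leey. Qed.

Lemma kappa_lt_pinfty_neq0 f x : x != 0 -> (kappa f x < +oo)%E -> f x != 0.
Proof. by rewrite /kappa => /negbTE->; case: eqP => // _; rewrite ltxx. Qed.

End ConditionNumberAtZero.

Section PolyConditionNumber.
Context {R : realType}.
Variable p : {poly R}.
Hypothesis p_neq0 : p != 0.

Let d := gcdp p ('X * p^`()).
Let a := p %/ d.
Let b := ('X * p^`()) %/ d.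
Let D := a ^+ 2 + b ^+ 2.
Let g t := a.[t] / Num.sqrt D.[t].
Let dg z := b.[z] * (a^`() * b - a * b^`()).[z] / Num.sqrt D.[z] ^+ 3.
Let m z := 1 + `|b.[z]| / `|a.[z]|.

Let p_eq : p = a * d. Proof. by rewrite divpK ?dvdp_gcdl. Qed.
Let Xderiv_eq : 'X * p^`() = b * d. Proof. by rewrite divpK ?dvdp_gcdr. Qed.

Let sqrtD_eq z : Num.sqrt D.[z] = Num.sqrt (a.[z] ^+ 2 + b.[z] ^+ 2).
Proof. by rewrite hornerD !horner_exp. Qed.

Let D_gt0 z : 0 < D.[z].
Proof.
have a_b_coprime : coprimep a b by rewrite coprimep_div_gcd ?p_neq0.
rewrite hornerD !horner_exp.
have [az|az] := eqVneq a.[z] 0.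
  have bz : b.[z] != 0 by apply: coprimep_root a_b_coprime _; rewrite /root az.
  by rewrite az expr0n add0r exprn_even_gt0.
by rewrite ltr_pwDl ?sqr_ge0 // exprn_even_gt0.
Qed.

Let g_derive (z : R) : is_derive z 1 g (dg z).
Proof.
have s_gt0 : 0 < Num.sqrt D.[z] by rewrite sqrtr_gt0 D_gt0.
have sqrtD_derive : is_derive z 1 (Num.sqrt \o horner D)
    ((2 * Num.sqrt D.[z])^-1 * D^`().[z]).
  exact: is_derive1_comp (is_derive1_sqrt (D_gt0 z)) (is_derive_poly D z).
have -> : g = horner a * (fun t => ((Num.sqrt \o horner D) t)^-1) by apply/funext.
apply: is_derive_eq (is_deriveM (is_derive_poly a z)
  (is_deriveV (f := Num.sqrt \o horner D) (lt0r_neq0 s_gt0) sqrtD_derive)) _.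
rewrite /dg /=.
have s_sqr : Num.sqrt D.[z] ^+ 2 = a.[z] ^+ 2 + b.[z] ^+ 2.
  by rewrite sqr_sqrtr ?ltW ?D_gt0 // hornerD !horner_exp.
set s := Num.sqrt D.[z] in s_gt0 s_sqr *; clearbody s.
rewrite /D derivD !deriv_exp !hornerE /GRing.scale /=.
have -> : s^-1 * a^`().[z] = a^`().[z] * (a.[z] ^+ 2 + b.[z] ^+ 2) / s ^+ 3.
  by rewrite -s_sqr; field; rewrite gt_eqF.
by field; rewrite gt_eqF.
Qed.

Let mu_horner z : z != 0 -> p.[z] != 0 -> mu (horner p) z = (m z)%:E.
Proof.
move=> z_neq0 pz_neq0.
have dz_neq0 : d.[z] != 0.
  by apply: contraNneq pz_neq0; rewrite p_eq hornerM => ->; rewrite mulr0.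
have zp'_eq : z * p^`().[z] = b.[z] * d.[z] by rewrite -hornerM -Xderiv_eq hornerM hornerX.
by rewrite /mu kappa_horner // zp'_eq p_eq !hornerM !normrM -mulf_div divff ?mulr1 ?normr_eq0.
Qed.

Let scaled_dg_bounded : exists K, forall z, `|z * dg z| <= K.
Proof.
have a_neq0 : a != 0 by apply: contraNneq p_neq0; rewrite p_eq => ->; rewrite mul0r.
set N := 'X * (a^`() * b - a * b^`()).
set E := if (size b <= size a)%N then a ^+ 2 else b ^+ 2.
have E_le_D z : `|E.[z]| <= D.[z].
  rewrite /E hornerD !horner_exp.
  by case: ifP => _; rewrite horner_exp ger0_norm ?sqr_ge0 // ?lerDl ?lerDr sqr_ge0.
have size_NE : (size N <= size E)%N.
  apply: leq_trans (size_Xwronskian_le a b) _; rewrite /E.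
  case: (leqP (size b) (size a)) => [ba|ab] /=.
    by rewrite expr2 size_mul // -!subn1 leq_sub2r // leq_add2l.
  have b_neq0 : b != 0 by rewrite -size_poly_gt0 (leq_ltn_trans _ ab).
  by rewrite expr2 size_mul // -!subn1 leq_sub2r // leq_add2r ltnW.
have [K N_le_D] := horner_bigO_pos D_gt0 E_le_D size_NE.
exists K => z.
have s_gt0 : 0 < Num.sqrt D.[z] by rewrite sqrtr_gt0 D_gt0.
have b_le_s : `|b.[z]| <= Num.sqrt D.[z] by rewrite sqrtD_eq addrC ler_norm_sqrt_sum_sqr.
have -> : z * dg z = b.[z] * N.[z] / Num.sqrt D.[z] ^+ 3.
  by rewrite /dg /N hornerM hornerX; field; rewrite gt_eqF.
rewrite normf_div normrM (gtr0_norm (exprn_gt0 3 s_gt0)) ler_pdivrMr ?exprn_gt0 //.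
apply: le_trans (ler_pM (normr_ge0 _) (normr_ge0 _) b_le_s (N_le_D z)) _.
by rewrite -[X in _ * (K * X)](sqr_sqrtr (ltW (D_gt0 z))) mulrCA -exprS.
Qed.

Let m_norm_g_bounds z : a.[z] != 0 -> 1 <= m z * `|g z| <= 2.
Proof.
move=> az_neq0.
have s_gt0 : 0 < Num.sqrt D.[z] by rewrite sqrtr_gt0 D_gt0.
have -> : m z * `|g z| = (`|a.[z]| + `|b.[z]|) / Num.sqrt D.[z].
  by rewrite /m /g normf_div (gtr0_norm s_gt0); field; rewrite normr_eq0 az_neq0 gt_eqF.
by rewrite ler_pdivlMr // ler_pdivrMr // mul1r sqrtD_eq sqrt_sum_sqr_le_sum_norm.
Qed.

Let horner_neq0 y : y != 0 -> a.[y] != 0 -> p.[y] != 0.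
Proof.
move=> y_neq0; apply: contraNN => py_eq0.
exact: root_div_gcdp_Xderiv p_neq0 y_neq0 py_eq0.
Qed.

Lemma poly_mu_ball_bound : exists C, 1 <= C /\ forall x y, x != 0 -> p.[x] != 0 ->
  (reldist y x < (1 / (C * fine (mu (horner p) x)))%:E)%E ->
  (mu (horner p) y <= C%:E * mu (horner p) x)%E.
Proof.
have [K zdg_le] := scaled_dg_bounded.
have K_ge0 : 0 <= K by apply: le_trans (zdg_le 0); rewrite mul0r normr0.
(* 2 K keeps |g y| >= |g x| / 2 on the ball; 4 absorbs the two factors 2 of
   m_norm_g_bounds. *)
exists (2 * K + 4); split=> [|x y x_neq0 px_neq0]; first lra.
have ax_neq0 : a.[x] != 0.
  by apply: contraNneq px_neq0; rewrite p_eq hornerM => ->; rewrite mul0r.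
rewrite mu_horner // /= /reldist (negbTE x_neq0) andbF.
case: ifP => [yx_gt0|_]; last by rewrite ltNge leey.
rewrite lte_fin => ln_lt.
have y_neq0 : y != 0 by apply: contraTneq yx_gt0 => ->; rewrite mul0r ltxx.
have g_close : `|g x - g y| <= K * `|ln (x / y)|.
  by apply: scaled_derive_bounded_ln_lipschitz g_derive zdg_le _; rewrite mulrC.
have /andP[gx_lo _] := m_norm_g_bounds x ax_neq0.
have mx_ge1 : 1 <= m x by rewrite lerDl divr_ge0.
have gy_lo : 1 / 2 <= m x * `|g y|.
  have mx_gt0 : 0 < (2 * K + 4) * m x by rewrite mulr_gt0 //; lra.
  move: ln_lt; rewrite ltr_pdivlMr // => ln_lt.
  have gxy_dist := lerB_dist (g x) (g y).
  have := ler_wpM2l (ltW (lt_le_trans ltr01 mx_ge1)) g_close.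
  nra.
have gy_gt0 : 0 < `|g y|.
  by rewrite -(pmulr_rgt0 _ (lt_le_trans ltr01 mx_ge1)); apply: lt_le_trans gy_lo.
have ay_neq0 : a.[y] != 0.
  by apply: contraTneq gy_gt0 => ay_eq0; rewrite /g ay_eq0 mul0r normr0 ltxx.
have /andP[_ gy_hi] := m_norm_g_bounds y ay_neq0.
rewrite mu_horner ?horner_neq0 // lee_fin.
have my_le : m y <= 4 * m x by rewrite -(ler_pM2r gy_gt0); nra.
nra.
Qed.

End PolyConditionNumber.

Theorem mainTheorem6 (R : realType) (p : {poly R}) :
  p != 0 -> amenable [set: R] (fun x : R => p.[x]).
Proof.
move=> p_neq0; have [C [C_ge1 mu_le]] := poly_mu_ball_bound _ p_neq0.
exists C; split=> [|x _ kappa_fin /=]; first lra.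
split=> // y; have [->|x_neq0] := eqVneq x 0.
  by move/reldist0_lt_fin->; rewrite mu0 mule1 lee_fin.
by apply: mu_le; last exact: kappa_lt_pinfty_neq0 kappa_fin.
Qed.
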